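(* Let $m=2^\theta\mu$ with $\theta\ge1$ and $\mu$ odd. The graph $\mathcal{A}_\mu$ is a disjoint union of directed cycles. The graph $\mathcal{A}_m$ is isomorphic to the graph obtained from $\mathcal{A}_\mu$ by replacing each cycle of length $\alpha$ by a copy of the flower cycle $C_\alpha(T_2^\theta)$. Equivalently, $\mathcal{A}_m$ is the disjoint union over the cycles of $\mathcal{A}_\mu$ of graphs $C_\alpha(T_2^\theta)$, where $\alpha$ is the length of the corresponding cycle.
   Context: For a positive integer $m$, $\mathcal{A}_m$ is the directed graph on $\{0,\dots,m-1\}$ with an edge $x\to 2x\bmod m$ for each $x$. A grounded tree is a finite directed graph in which every vertex has out-degree one, a root vertex has a loop, the graph is a tree after deleting this loop, and every vertex has a directed path to the root. The regular grounded tree $T_w^\ell$ ($w\ge1,\ell\ge1$) has $w^\ell$ vertices in layers $0,\dots,\ell$. Layer $0$ is the root, with a loop. Layer $1$ has $w-1$ vertices mapping to the root. Each vertex of layer $j<\ell$, $j\ge1$, has exactly $w$ vertices of layer $j+1$ mapping to it. Layer $\ell$ consists of leaves. For $\alpha\ge1$ and a grounded tree $T$, the flower cycle $C_\alpha(T)$ is built as follows: take $\alpha$ disjoint copies of $T$, delete the root loops, and add an edge from the root of copy $i$ to the root of copy $i+1$, with indices mod $\alpha$. *)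

(* Directed graphs with out-degree one are represented as
   functional graphs: a finite vertex type V and a map f : V -> V, the edges
   being x -> f x (the relation [frel f]). *)
From mathcomp Require Import all_boot.
Set Implicit Arguments. Unset Strict Implicit. Unset Printing Implicit Defensive.

Definition fg_iso (V W : finType) (f : V -> V) (g : W -> W) : Prop :=
  exists phi : V -> W, bijective phi /\
    forall x y : V, frel f x y = frel g (phi x) (phi y).

(* The graph A_m on {0,...,m-1} with edges x -> 2x mod m. *)
Lemma dbl_lt m (x : 'I_m) : x.*2 %% m < m.
Proof. by apply: ltn_pmod; apply: leq_ltn_trans (ltn_ord x). Qed.
Definition dbl m (x : 'I_m) : 'I_m := Ordinal (dbl_lt x).

(* "Disjoint union of directed cycles": every vertex lies on a directed cycle,
   i.e. x is reachable from its successor f x (out-degree is one everywhere). *)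
Definition union_of_cycles (V : finType) (f : V -> V) : Prop :=
  forall x : V, fconnect f (f x) x.

(* The (vertex sets of the) cycles / connected components: the set of
   forward orbits {y | x ->* y}. When f is a union of cycles these are
   exactly the vertex sets of its cycles. *)
Definition cycles_of (V : finType) (f : V -> V) : {set {set V}} :=
  [set [set y | fconnect f x y] | x : V].
Definition cycle_idx (V : finType) (f : V -> V) : finType :=
  {C : {set V} | C \in cycles_of f}.
Definition cycle_len (V : finType) (f : V -> V) (C : cycle_idx f) : nat :=
  #|val C|.

(* The regular grounded tree T_w^l, concretely: vertices 0 .. w^l - 1,
   edge v -> v %/ w.  Root 0 (loop); layer j >= 1 is [w^(j-1), w^j):
   layer 1 = {1..w-1} (w-1 vertices mapping to 0); every vertex v of layer
   j in [1,l) has exactly the w children w*v, ..., w*v + w - 1 in layer j+1;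
   layer l = [w^(l-1), w^l) consists of leaves. *)
Definition rt_V (w l : nat) : finType := 'I_(w ^ l).
Lemma rt_lt w l (v : 'I_(w ^ l)) : v %/ w < w ^ l.
Proof. exact: leq_ltn_trans (leq_div v w) (ltn_ord v). Qed.
Definition rt_f (w l : nat) (v : rt_V w l) : rt_V w l := Ordinal (rt_lt v).
Lemma rt_pos w l : 0 < w -> 0 < w ^ l.
Proof. by move=> hw; rewrite expn_gt0 hw. Qed.
Definition rt_root (w l : nat) (hw : 0 < w) : rt_V w l := Ordinal (rt_pos l hw).

Lemma two_pos : 0 < 2. Proof. by []. Qed.

(* Flower cycle C_alpha(T) for a grounded tree T = (V, f, r):
   vertices (i, v) with i : 'I_alpha the copy index; the root loop of copy i
   is replaced by an edge to the root of copy i+1 (mod alpha). *)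
Definition flower_V (alpha : nat) (V : finType) : finType := ('I_alpha * V)%type.
Definition flower_f (alpha : nat) (V : finType) (f : V -> V) (r : V)
  (p : flower_V alpha V) : flower_V alpha V :=
  if p.2 == r then (ordS p.1, r) else (p.1, f p.2).

Definition dsum_f (I : finType) (T_ : I -> finType) (f_ : forall i, T_ i -> T_ i)
  (p : {i : I & T_ i}) : {i : I & T_ i} :=
  Tagged T_ (f_ (tag p) (tagged p)).

From mathcomp Require Import all_boot zify.
Set Implicit Arguments. Unset Strict Implicit. Unset Printing Implicit Defensive.

(** By the Chinese remainder theorem A_m is the product of A_mu and
   A_(2^theta).  Doubling is invertible modulo the odd number mu, so A_mu is a
   permutation.  Modulo 2^theta doubling shifts the binary digits, and reading
   the digits backwards turns it into the map v |-> v / 2 of T_2^theta.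
   Finally, for a permutation f and a grounded tree (W, g, r), the product
   f x g is a union of flower cycles C_alpha(W), one for each cycle of f of
   length alpha: the pair (x, t), with t at depth d in the tree, sits at the
   vertex t of the copy indexed by the position of f^d x on its cycle. *)

Definition prod_map (A B : Type) (f : A -> A) (g : B -> B) (p : A * B) : A * B :=
  (f p.1, g p.2).

Lemma can_iter (T : Type) (f g : T -> T) n : cancel f g -> cancel (iter n f) (iter n g).
Proof.
move=> fK; elim: n => // n IH x.
by rewrite [iter n.+1 f x]iterSr [iter n.+1 g _]iterS IH fK.
Qed.

Lemma fg_isoP (V W : finType) (f : V -> V) (g : W -> W) :
  fg_iso f g <-> exists2 phi : V -> W, bijective phi & phi \o f =1 g \o phi.
Proof.
split=> [[phi [phi_bij phiE]]|[phi phi_bij phiC]].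
  by exists phi => // x; have /= := phiE x (f x); rewrite eqxx => /esym/eqP.
by exists phi; split=> // x y /=; rewrite -[g _]phiC (bij_eq phi_bij).
Qed.

Lemma fg_iso_trans (U V W : finType) (f : U -> U) (g : V -> V) (h : W -> W) :
  fg_iso f g -> fg_iso g h -> fg_iso f h.
Proof.
move=> [phi [phi_bij phiE]] [psi [psi_bij psiE]].
by exists (psi \o phi); split=> [|x y]; [exact: bij_comp | rewrite phiE psiE].
Qed.

Lemma fg_iso_prod_mapr (U V W : finType) (f : U -> U) (g : V -> V) (h : W -> W) :
  fg_iso g h -> fg_iso (prod_map f g) (prod_map f h).
Proof.
move=> /fg_isoP [phi [psi phiK psiK] phiC]; apply/fg_isoP.
exists (fun p => (p.1, phi p.2)); last by move=> [x y]; congr pair; apply: phiC.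
by exists (fun p => (p.1, psi p.2)) => [] [x y] /=; rewrite ?phiK ?psiK.
Qed.

Section Cycles.
Variables (V : finType) (f : V -> V).

Lemma cycle_of_mem (x : V) : [set y | fconnect f x y] \in cycles_of f.
Proof. by apply/imsetP; exists x. Qed.

Definition cycle_of (x : V) : cycle_idx f := exist _ [set y | fconnect f x y] (cycle_of_mem x).

Lemma cycle_rep_ex (C : cycle_idx f) : exists x, val C == [set y | fconnect f x y].
Proof. by case: C => /= C /imsetP [x _ ->]; exists x. Qed.

Definition cycle_rep (C : cycle_idx f) : V := xchoose (cycle_rep_ex C).

Lemma cycle_repE (C : cycle_idx f) : val C = [set y | fconnect f (cycle_rep C) y].
Proof. exact/eqP/(xchooseP (cycle_rep_ex C)). Qed.

Lemma cycle_of_rep (C : cycle_idx f) : cycle_of (cycle_rep C) = C.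
Proof. by apply: val_inj; rewrite /= -cycle_repE. Qed.

Lemma connect_cycle_rep (y : V) : fconnect f (cycle_rep (cycle_of y)) y.
Proof.
have /setP/(_ y) := cycle_repE (cycle_of y).
by rewrite /= !inE connect0 => <-.
Qed.

Lemma cycle_len_order (C : cycle_idx f) : cycle_len C = order f (cycle_rep C).
Proof. by rewrite /cycle_len cycle_repE /order cardsE. Qed.

Lemma cycle_len_gt0 (C : cycle_idx f) : 0 < cycle_len C.
Proof. by rewrite cycle_len_order order_gt0. Qed.

Definition cycle_pos (y : V) : nat := findex f (cycle_rep (cycle_of y)) y.

Lemma cycle_pos_lt (y : V) : cycle_pos y < cycle_len (cycle_of y).
Proof. by rewrite cycle_len_order; apply: findex_max (connect_cycle_rep y). Qed.

Lemma iter_cycle_pos (y : V) : iter (cycle_pos y) f (cycle_rep (cycle_of y)) = y.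
Proof. exact: iter_findex (connect_cycle_rep y). Qed.

Hypothesis f_inj : injective f.

Lemma inj_union_of_cycles : union_of_cycles f.
Proof. by move=> x; rewrite fconnect_sym // fconnect1. Qed.

Lemma cycle_of_connect (x y : V) : fconnect f x y -> cycle_of x = cycle_of y.
Proof.
move=> xy; apply: val_inj; apply/setP => z; rewrite !inE.
apply/idP/idP => [xz|]; last exact: connect_trans.
by apply: connect_trans xz; rewrite fconnect_sym.
Qed.

Lemma cycle_of_iter (n : nat) (x : V) : cycle_of (iter n f x) = cycle_of x.
Proof. by apply/esym/cycle_of_connect/fconnect_iter. Qed.

Lemma cycle_pos_iter (C : cycle_idx f) (i : nat) :
  i < cycle_len C -> cycle_pos (iter i f (cycle_rep C)) = i.
Proof.
by rewrite /cycle_pos cycle_of_iter cycle_of_rep cycle_len_order => /findex_iter.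
Qed.

Lemma cycle_pos_f (y : V) : cycle_pos (f y) = (cycle_pos y).+1 %% cycle_len (cycle_of y).
Proof.
set C := cycle_of y; have := cycle_pos_lt y.
rewrite -[in LHS](iter_cycle_pos y) -iterS -/C leq_eqVlt => /orP [/eqP lenE | pos_lt].
  rewrite lenE modnn cycle_len_order iter_order //.
  exact: (@cycle_pos_iter C 0 (cycle_len_gt0 C)).
by rewrite cycle_pos_iter // modn_small.
Qed.

End Cycles.

Section TreeDepth.
Variables (W : finType) (g : W -> W) (r : W).
Hypothesis g_grounded : forall t, exists n, iter n g t == r.

Definition depth (t : W) : nat := ex_minn (g_grounded t).

Lemma depth_root : depth r = 0.
Proof. by rewrite /depth; case: ex_minnP => n _ /(_ 0 (eqxx r)); rewrite leqn0 => /eqP. Qed.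

Lemma depth_g (t : W) : t != r -> depth t = (depth (g t)).+1.
Proof.
move=> t_r; rewrite /depth; case: ex_minnP => n gn_t n_min; case: ex_minnP => k gk_t k_min.
case: n gn_t n_min => [|n] gn_t n_min; first by rewrite /= (negbTE t_r) in gn_t.
apply/eqP; rewrite eqSS eqn_leq k_min -?iterSr //.
by rewrite -ltnS n_min // iterSr.
Qed.

End TreeDepth.

Section ProductFlowers.
Variables (V W : finType) (f : V -> V) (g : W -> W) (r : W).
Hypotheses (f_inj : injective f) (g_root : g r = r).
Hypothesis g_grounded : forall t, exists n, iter n g t == r.

Local Notation flower C := (flower_V (cycle_len C) W).
Local Notation flowers := {C : cycle_idx f & flower C}.
Local Notation flowers_f := (dsum_f (fun C : cycle_idx f => @flower_f (cycle_len C) W g r)).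

Definition flower_vertex (C : cycle_idx f) (n : nat) (t : W) : flowers :=
  Tagged (fun C => flower C) (Ordinal (ltn_pmod n (cycle_len_gt0 C)), t).

Definition to_flowers (p : V * W) : flowers :=
  flower_vertex (cycle_of f p.1) (cycle_pos f (iter (depth g_grounded p.2) f p.1)) p.2.

Definition of_flowers (q : flowers) : V * W :=
  (iter (depth g_grounded (tagged q).2) (finv f) (iter (tagged q).1 f (cycle_rep (tag q))),
   (tagged q).2).

Lemma to_flowersK : cancel to_flowers of_flowers.
Proof.
move=> [x t]; rewrite /to_flowers /of_flowers /= -(cycle_of_iter f_inj (depth g_grounded t)).
by rewrite modn_small ?cycle_pos_lt // iter_cycle_pos can_iter //; apply: finv_f.
Qed.

Lemma of_flowersK : cancel of_flowers to_flowers.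
Proof.
move=> [C [i t]]; rewrite /to_flowers /of_flowers /=.
set y := iter i f (cycle_rep C); set x := iter _ (finv f) y.
have x_y : iter (depth g_grounded t) f x = y by apply: can_iter; apply: f_finv.
have x_C : cycle_of f x = C.
  by rewrite -(cycle_of_iter f_inj (depth g_grounded t)) x_y cycle_of_iter // cycle_of_rep.
rewrite x_y /flower_vertex x_C /Tagged; do 2 f_equal; apply: val_inj => /=.
by rewrite cycle_pos_iter // modn_small.
Qed.

Lemma to_flowers_f : to_flowers \o prod_map f g =1 flowers_f \o to_flowers.
Proof.
move=> [x t]; rewrite /to_flowers /prod_map /= (cycle_of_iter f_inj 1 x).
rewrite /flower_vertex /dsum_f /flower_f /=; case: eqP => [->|/eqP t_r].
  rewrite g_root !depth_root /= cycle_pos_f //.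
  rewrite /Tagged; do 2 f_equal; apply: val_inj => /=.
  by rewrite modn_mod -[X in X %% _ = _]addn1 -[X in _ = X %% _]addn1 modnDml.
by rewrite (depth_g g_grounded t_r) -iterSr.
Qed.

Lemma fg_iso_prod_flowers : fg_iso (prod_map f g) flowers_f.
Proof.
apply/fg_isoP; exists to_flowers; last exact: to_flowers_f.
by exists of_flowers; [apply: to_flowersK | apply: of_flowersK].
Qed.

End ProductFlowers.

Lemma dbl_inj (mu : nat) : odd mu -> injective (@dbl mu).
Proof.
move=> mu_odd; have mu_gt0 := odd_gt0 mu_odd.
pose half_mod (x : 'I_mu) : 'I_mu := Ordinal (ltn_pmod (x * (mu./2).+1) mu_gt0).
apply: (@can_inj _ _ _ half_mod) => x; apply: val_inj => /=.
have two_half : 2 * (mu./2).+1 = mu + 1.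
  by rewrite -{2}(odd_double_half mu) mu_odd -muln2; lia.
by rewrite modnMml -muln2 -mulnA two_half mulnDr muln1 modnMDl modn_small.
Qed.

Section ChineseRemainder.
Variables k mu : nat.

Lemma ltn_mod_ord_dvd (n d : nat) (x : 'I_n) : d %| n -> x %% d < d.
Proof.
move=> d_n; apply: ltn_pmod; case: d d_n => // /[!dvd0n] /eqP n0.
by move: (ltn_ord x); rewrite [X in _ < X]n0.
Qed.

Definition crt_pair (x : 'I_(k * mu)) : 'I_mu * 'I_k :=
  (Ordinal (ltn_mod_ord_dvd x (dvdn_mull k (dvdnn mu))),
   Ordinal (ltn_mod_ord_dvd x (dvdn_mulr mu (dvdnn k)))).

Lemma crt_pair_dbl (x : 'I_(k * mu)) :
  crt_pair (dbl x) = prod_map (@dbl mu) (@dbl k) (crt_pair x).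
Proof.
congr pair; apply: val_inj; rewrite /= -!muln2 modnMml modn_dvdm //.
  exact: dvdn_mull.
exact: dvdn_mulr.
Qed.

Lemma crt_pair_bij : coprime k mu -> bijective crt_pair.
Proof.
move=> co_k_mu; apply: inj_card_bij; last by rewrite card_prod !card_ord mulnC.
move=> x y /(congr1 (fun p => (val p.1, val p.2))) [xy_mu xy_k]; apply: val_inj.
have /eqP := chinese_remainder co_k_mu x y; rewrite /= xy_mu xy_k !eqxx.
by rewrite !modn_small // => /(_ isT).
Qed.

Lemma fg_iso_dbl_crt : coprime k mu -> fg_iso (@dbl (k * mu)) (prod_map (@dbl mu) (@dbl k)).
Proof.
by move=> co_k_mu; apply/fg_isoP; exists crt_pair; [apply: crt_pair_bij | apply: crt_pair_dbl].
Qed.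

End ChineseRemainder.

(* [bitrev n t] reverses the [n] lowest binary digits of [t]: digit [i]
   becomes digit [n - 1 - i]. *)
Fixpoint bitrev (n t : nat) : nat :=
  if n is n'.+1 then (bitrev n' t).*2 + odd (t %/ 2 ^ n') else 0.

Lemma bitrev_lt (n t : nat) : bitrev n t < 2 ^ n.
Proof. by elim: n => //= n IH; rewrite expnS; move: IH; case: (odd _); rewrite -!muln2 /=; lia. Qed.

Lemma odd_div_modX (s k i : nat) : i < k -> odd ((s %% 2 ^ k) %/ 2 ^ i) = odd (s %/ 2 ^ i).
Proof.
move=> i_k; rewrite {2}(divn_eq s (2 ^ k)) -(subnK (ltnW i_k)) expnD mulnA divnMDl ?expn_gt0 //.
by rewrite oddD oddM -(subnSK i_k) expnS oddM andbF.
Qed.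

Lemma bitrev_modX (n k s : nat) : n <= k -> bitrev n (s %% 2 ^ k) = bitrev n s.
Proof. by elim: n => // n IH n_k; rewrite /= IH ?odd_div_modX // ltnW. Qed.

Lemma bitrev_double (n t : nat) : bitrev n (t.*2 %% 2 ^ n) = (bitrev n t)./2.
Proof.
elim: n t => [|n IH] t //.
rewrite [LHS]/= (bitrev_modX _ (leqnSn n)) -(bitrev_modX _ (leqnn n)) IH odd_div_modX //.
rewrite [bitrev n.+1 t]/= [in RHS]addnC half_bit_double.
case: n IH => [|n] IH; first by rewrite /= expn0 divn1 odd_double.
rewrite [bitrev n.+1 t]/= [_ + odd (t %/ _)]addnC half_bit_double addnC.
by rewrite -muln2 expnS mulnC divnMl.
Qed.

Lemma bitrev_inj (n s t : nat) : s < 2 ^ n -> t < 2 ^ n -> bitrev n s = bitrev n t -> s = t.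
Proof.
elim: n s t => [|n IH] s t; first by rewrite expn0; case: s => [|?]; case: t => [|?].
move=> s_lt t_lt /= st_rev.
have st_top : odd (s %/ 2 ^ n) = odd (t %/ 2 ^ n).
  by move: (congr1 odd st_rev); rewrite !oddD !odd_double !oddb.
have st_low : s %% 2 ^ n = t %% 2 ^ n.
  apply: IH; rewrite ?ltn_pmod ?expn_gt0 // !bitrev_modX //.
  by move: (congr1 half st_rev); rewrite ![_ + odd _]addnC !half_bit_double.
have top_bit x : x < 2 ^ n.+1 -> x %/ 2 ^ n = odd (x %/ 2 ^ n).
  by rewrite expnS -ltn_divLR ?expn_gt0 //; case: (x %/ 2 ^ n) => [|[|]].
by rewrite (divn_eq s (2 ^ n)) (divn_eq t (2 ^ n)) st_low top_bit // [in RHS]top_bit // st_top.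
Qed.

Definition bitrev_ord (n : nat) (x : 'I_(2 ^ n)) : rt_V 2 n := Ordinal (bitrev_lt n x).

Lemma fg_iso_dbl_rt (n : nat) : fg_iso (@dbl (2 ^ n)) (@rt_f 2 n).
Proof.
apply/fg_isoP; exists (@bitrev_ord n) => [|x].
  apply: inj_card_bij; last by rewrite /rt_V !card_ord.
  by move=> x y /(congr1 val) /(bitrev_inj (ltn_ord x) (ltn_ord y)) /val_inj.
by apply: val_inj; rewrite /= bitrev_double divn2.
Qed.

Lemma rt_f_root (n : nat) : @rt_f 2 n (@rt_root 2 n two_pos) = @rt_root 2 n two_pos.
Proof. exact: val_inj. Qed.

Lemma rt_f_iter (n k : nat) (t : rt_V 2 n) : val (iter k (@rt_f 2 n) t) = t %/ 2 ^ k.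
Proof. by elim: k => [|k IH]; rewrite ?expn0 ?divn1 // iterS /= IH expnS mulnC divnMA. Qed.

Lemma rt_grounded (n : nat) (t : rt_V 2 n) :
  exists k, iter k (@rt_f 2 n) t == @rt_root 2 n two_pos.
Proof. by exists n; apply/eqP/val_inj; rewrite rt_f_iter /= divn_small. Qed.

Theorem proposition5 (m theta mu : nat) :
  1 <= theta -> odd mu -> m = 2 ^ theta * mu ->
  union_of_cycles (@dbl mu) /\
  fg_iso (@dbl m)
    (@dsum_f (cycle_idx (@dbl mu))
       (fun C => flower_V (cycle_len C) (rt_V 2 theta))
       (fun C => @flower_f (cycle_len C) (rt_V 2 theta)
                   (@rt_f 2 theta) (@rt_root 2 theta two_pos))).
Proof.
move=> _ mu_odd ->; have dbl_mu_inj := dbl_inj mu_odd.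
split; first exact: inj_union_of_cycles.
have coprime_2X_mu : coprime (2 ^ theta) mu by rewrite coprimeXl // coprime2n.
apply: fg_iso_trans (fg_iso_dbl_crt coprime_2X_mu) _.
apply: fg_iso_trans (fg_iso_prod_mapr _ (fg_iso_dbl_rt theta)) _.
exact: fg_iso_prod_flowers dbl_mu_inj (rt_f_root theta) (@rt_grounded theta).
Qed.
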